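(* Consider the Bellman problem: find $v\in\mathbb{R}^M$ with $\sup_{P\in\mathcal{P}}\{-A(P)v+b(P)\}=0$. Assume (H0), that $A$ and $b$ are bounded on $\mathcal{P}$, and that $A(P)$ is a monotone matrix for every $P\in\mathcal{P}$. Then for any $v^0\in\mathbb{R}^M$ and any positive summable sequence $(\epsilon^\ell)$, the sequence $(v^\ell)_{\ell\ge1}$ produced by $\epsilon$-policy iteration converges to $v$, the unique solution of the Bellman problem (in particular a solution exists).
   Context: $\mathcal{P}=\prod_{i=1}^M\mathcal{P}_i$ is a product of nonempty sets; $A:\mathcal{P}\to\mathbb{R}^{M\times M}$ and $b:\mathcal{P}\to\mathbb{R}^M$ are row-decoupled: row $i$ of $A(P)$ and $[b(P)]_i$ depend only on $P_i$. Order on $\mathbb{R}^M$ and suprema are componentwise. A real square matrix $A$ is monotone if $Av\ge0$ implies $v\ge0$. (H0): $P\mapsto A(P)^{-1}$ is bounded on $\{P\in\mathcal{P}: A(P)\text{ nonsingular}\}$. For $x\in\mathbb{R}^M$ and $c\in\mathbb{R}$, $x+c$ adds $c$ to each component. $\epsilon$-policy iteration: pick a sequence $\epsilon^\ell>0$ with $\sum_{\ell\ge1}\epsilon^\ell<\infty$; for $\ell=1,2,\dots$ choose $P^\ell\in\mathcal{P}$ with $-A(P^\ell)v^{\ell-1}+b(P^\ell)+\epsilon^\ell\ge\sup_{P\in\mathcal{P}}\{-A(P)v^{\ell-1}+b(P)\}$, and let $v^\ell$ be the exact solution of $A(P^\ell)v^\ell=b(P^\ell)$. *)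

From Stdlib Require Import Reals Lra Lia List.
Open Scope R_scope.

(* Vectors in R^M are functions nat -> R (only indices i < M matter);
   M x M matrices are functions nat -> nat -> R. *)

Definition sumM (M : nat) (f : nat -> R) : R :=
  fold_right Rplus 0 (map f (seq 0 M)).

Definition mv (M : nat) (A : nat -> nat -> R) (v : nat -> R) : nat -> R :=
  fun i => sumM M (fun j => A i j * v j).

Definition mm (M : nat) (A B : nat -> nat -> R) : nat -> nat -> R :=
  fun i k => sumM M (fun j => A i j * B j k).

Definition idm : nat -> nat -> R := fun i j => if Nat.eqb i j then 1 else 0.

Definition is_inverse (M : nat) (A B : nat -> nat -> R) : Prop :=
  forall i k, (i < M)%nat -> (k < M)%nat ->
    mm M A B i k = idm i k /\ mm M B A i k = idm i k.

Definition nonsingular (M : nat) (A : nat -> nat -> R) : Prop :=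
  exists B, is_inverse M A B.

Definition monotone_mx (M : nat) (A : nat -> nat -> R) : Prop :=
  forall v : nat -> R,
    (forall i, (i < M)%nat -> 0 <= mv M A v i) ->
    forall i, (i < M)%nat -> 0 <= v i.

(* Row-decoupled data: a policy P is an element of the product
   prod_i Pol i, i.e. P : forall i, Pol i.  Row i of A(P) is a i (P i),
   and [b(P)]_i is bb i (P i). *)
Definition Amat (Pol : nat -> Type) (a : forall i, Pol i -> nat -> R)
  (P : forall i, Pol i) : nat -> nat -> R := fun i j => a i (P i) j.

Definition bvec (Pol : nat -> Type) (bb : forall i, Pol i -> R)
  (P : forall i, Pol i) : nat -> R := fun i => bb i (P i).

Definition resid (M : nat) (Pol : nat -> Type) (a : forall i, Pol i -> nat -> R)
  (bb : forall i, Pol i -> R) (P : forall i, Pol i) (v : nat -> R) : nat -> R :=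
  fun i => - mv M (Amat Pol a P) v i + bvec Pol bb P i.

Definition is_sup_resid (M : nat) (Pol : nat -> Type) (a : forall i, Pol i -> nat -> R)
  (bb : forall i, Pol i -> R) (v s : nat -> R) : Prop :=
  forall i, (i < M)%nat ->
    is_lub (fun x => exists P : forall k, Pol k, x = resid M Pol a bb P v i) (s i).

Definition bellman_sol (M : nat) (Pol : nat -> Type) (a : forall i, Pol i -> nat -> R)
  (bb : forall i, Pol i -> R) (v : nat -> R) : Prop :=
  is_sup_resid M Pol a bb v (fun _ => 0).

Definition H0 (M : nat) (Pol : nat -> Type) (a : forall i, Pol i -> nat -> R) : Prop :=
  exists C : R, forall (P : forall i, Pol i) (B : nat -> nat -> R),
    is_inverse M (Amat Pol a P) B ->
    forall i j, (i < M)%nat -> (j < M)%nat -> Rabs (B i j) <= C.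

Definition bounded_data (M : nat) (Pol : nat -> Type) (a : forall i, Pol i -> nat -> R)
  (bb : forall i, Pol i -> R) : Prop :=
  exists K : R, forall (P : forall i, Pol i) i, (i < M)%nat ->
    Rabs (bvec Pol bb P i) <= K /\
    forall j, (j < M)%nat -> Rabs (Amat Pol a P i j) <= K.

Definition eps_policy_iteration (M : nat) (Pol : nat -> Type)
  (a : forall i, Pol i -> nat -> R) (bb : forall i, Pol i -> R)
  (eps : nat -> R) (pol : nat -> forall i, Pol i) (vs : nat -> nat -> R) : Prop :=
  forall l, (1 <= l)%nat ->
    (exists s, is_sup_resid M Pol a bb (vs (l - 1)%nat) s /\
       forall i, (i < M)%nat ->
         resid M Pol a bb (pol l) (vs (l - 1)%nat) i + eps l >= s i) /\
    (forall i, (i < M)%nat ->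
       mv M (Amat Pol a (pol l)) (vs l) i = bvec Pol bb (pol l) i).

(* Every policy matrix A(P) is monotone, hence invertible, and with (H0) the
   comparison principle turns A(P) x <= c into x <= G c for G = M max(C, 0).
   The policy P^{l+1} is eps^{l+1}-optimal at v^l, where the supremum of the
   residuals is at least the residual 0 of P^l; hence
   A(P^{l+1}) (v^l - v^{l+1}) <= eps^{l+1}, i.e. v^{l+1} >= v^l - G eps^{l+1}.
   Bounded above and increasing up to a summable error, the iterates converge.
   Passing to the limit in the eps-optimality inequality shows that the limit
   solves the Bellman equation, and comparing two solutions through a
   near-optimal policy of one of them gives uniqueness. *)

From Pilot Require Import Defs.
From Stdlib Require Import Reals Lra Lia List IndefiniteDescription Classical.
From mathcomp Require all_boot all_algebra Rstruct.
Open Scope R_scope.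

Lemma sumM_O f : sumM 0 f = 0.
Proof. reflexivity. Qed.

Lemma sumM_S M f : sumM (S M) f = sumM M f + f M.
Proof.
  unfold sumM. rewrite seq_S, map_app, fold_right_app. simpl.
  induction (map f (seq 0 M)) as [|x l IH]; simpl; [|rewrite IH]; lra.
Qed.

Lemma sumM_ext M f g :
  (forall j, (j < M)%nat -> f j = g j) -> sumM M f = sumM M g.
Proof.
  induction M as [|M IH]; intros H; [reflexivity|].
  rewrite !sumM_S, (H M), IH by (intros; try apply H; lia). reflexivity.
Qed.

Lemma sumM_le M f g :
  (forall j, (j < M)%nat -> f j <= g j) -> sumM M f <= sumM M g.
Proof.
  induction M as [|M IH]; intros H; [apply Rle_refl|].
  rewrite !sumM_S. apply Rplus_le_compat; [apply IH; intros j Hj|]; apply H; lia.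
Qed.

Lemma sumM_zero M f : (forall j, (j < M)%nat -> f j = 0) -> sumM M f = 0.
Proof.
  induction M as [|M IH]; intros H; [reflexivity|].
  rewrite sumM_S, (H M), IH by (intros; try apply H; lia). ring.
Qed.

Lemma sumM_const M c : sumM M (fun _ => c) = INR M * c.
Proof.
  induction M as [|M IH]; [rewrite !sumM_O; simpl; ring|]. rewrite sumM_S, IH, S_INR. ring.
Qed.

Lemma sumM_plus M f g : sumM M (fun j => f j + g j) = sumM M f + sumM M g.
Proof. induction M as [|M IH]; [rewrite !sumM_O; simpl; ring|]. rewrite !sumM_S, IH. ring. Qed.

Lemma sumM_opp M f : sumM M (fun j => - f j) = - sumM M f.
Proof. induction M as [|M IH]; [rewrite !sumM_O; simpl; ring|]. rewrite !sumM_S, IH. ring. Qed.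

Lemma sumM_scal M c f : sumM M (fun j => c * f j) = c * sumM M f.
Proof. induction M as [|M IH]; [rewrite !sumM_O; simpl; ring|]. rewrite !sumM_S, IH. ring. Qed.

Lemma sumM_abs M f : Rabs (sumM M f) <= sumM M (fun j => Rabs (f j)).
Proof.
  induction M as [|M IH]; [rewrite !sumM_O, Rabs_R0; lra|].
  rewrite !sumM_S. eapply Rle_trans; [apply Rabs_triang|lra].
Qed.

Lemma sumM_swap M N (F : nat -> nat -> R) :
  sumM M (fun j => sumM N (F j)) = sumM N (fun k => sumM M (fun j => F j k)).
Proof.
  induction M as [|M IH].
  - symmetry. apply sumM_zero. reflexivity.
  - rewrite sumM_S, IH, <- sumM_plus.
    apply sumM_ext. intros k _. rewrite sumM_S. reflexivity.
Qed.

Lemma sumM_idm M i f : (i < M)%nat -> sumM M (fun k => idm i k * f k) = f i.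
Proof.
  induction M as [|M IH]; intros Hi; [lia|].
  rewrite sumM_S. unfold idm at 2. destruct (Nat.eqb_spec i M) as [->|Hne].
  - rewrite sumM_zero; [ring|]. intros j Hj. unfold idm.
    destruct (Nat.eqb_spec M j); [lia|ring].
  - rewrite IH by lia. ring.
Qed.

Lemma mv_sub M A x y i :
  mv M A (fun j => x j - y j) i = mv M A x i - mv M A y i.
Proof.
  unfold mv, Rminus at 2. rewrite <- sumM_opp, <- sumM_plus. apply sumM_ext. intros; ring.
Qed.

Lemma mv_opp M A x i : mv M A (fun j => - x j) i = - mv M A x i.
Proof. unfold mv. rewrite <- sumM_opp. apply sumM_ext. intros; ring. Qed.

Lemma mv_mv M A B x i : mv M A (mv M B x) i = sumM M (fun k => mm M A B i k * x k).
Proof.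
  unfold mv, mm.
  transitivity (sumM M (fun j => sumM M (fun k => A i j * (B j k * x k)))).
  - apply sumM_ext. intros. rewrite sumM_scal. reflexivity.
  - rewrite sumM_swap. apply sumM_ext. intros.
    rewrite Rmult_comm, <- sumM_scal. apply sumM_ext. intros; ring.
Qed.

Lemma mv_abs_le M A x i K :
  (forall j, (j < M)%nat -> Rabs (A i j) <= K) ->
  Rabs (mv M A x i) <= K * sumM M (fun j => Rabs (x j)).
Proof.
  intros HA. eapply Rle_trans; [apply sumM_abs|].
  rewrite <- sumM_scal. apply sumM_le. intros j Hj.
  rewrite Rabs_mult. apply Rmult_le_compat_r; [apply Rabs_pos|auto].
Qed.

Lemma monotone_mx_le M A x y : monotone_mx M A ->
  (forall i, (i < M)%nat -> mv M A x i <= mv M A y i) ->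
  forall j, (j < M)%nat -> x j <= y j.
Proof.
  intros Hm Hxy j Hj.
  enough (0 <= y j - x j) by lra.
  apply (Hm (fun j => y j - x j)); auto.
  intros i Hi. rewrite mv_sub. specialize (Hxy i Hi). lra.
Qed.

(* Compare x with the supersolution u = B (c, ..., c), which solves A u = c. *)
Lemma monotone_mx_bound M A B C x c :
  monotone_mx M A -> is_inverse M A B ->
  (forall i j, (i < M)%nat -> (j < M)%nat -> Rabs (B i j) <= C) ->
  0 <= c -> (forall i, (i < M)%nat -> mv M A x i <= c) ->
  forall j, (j < M)%nat -> x j <= INR M * Rmax C 0 * c.
Proof.
  intros Hm Hinv HC Hc Hx j Hj.
  set (u := mv M B (fun _ => c)).
  assert (Hu : forall i, (i < M)%nat -> mv M A u i = c).
  { intros i Hi. unfold u. rewrite mv_mv.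
    transitivity (sumM M (fun k => idm i k * c)).
    - apply sumM_ext. intros k Hk. rewrite (proj1 (Hinv i k Hi Hk)). reflexivity.
    - exact (sumM_idm M i (fun _ => c) Hi). }
  apply Rle_trans with (u j).
  - apply (monotone_mx_le M A); auto. intros i Hi. rewrite Hu; auto.
  - unfold u, mv. rewrite Rmult_assoc, <- sumM_const. apply sumM_le. intros k Hk.
    apply Rmult_le_compat_r; [exact Hc|].
    eapply Rle_trans; [apply Rle_abs|].
    eapply Rle_trans; [apply HC; auto|apply Rmax_l].
Qed.

(* A monotone matrix is injective, hence invertible.  MathComp matrices act on
   row vectors, so the transpose is inverted. *)
Module MonotoneInvertible.
Import all_boot all_algebra Rstruct GRing.Theory.
Local Open Scope ring_scope.

Lemma sumM_big (M : nat) (f : nat -> R) : sumM M f = \sum_(j < M) f j.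
Proof.
rewrite /sumM -(big_mkord xpredT) /index_iota subn0.
have -> : List.seq 0 M = iota 0 M by elim: M 0%N => //= n IH k; rewrite IH.
by elim: (iota 0 M) => [|x s IH]; rewrite ?big_nil // big_cons /= IH.
Qed.

Lemma monotone_mx_nonsingular (M : nat) (A : nat -> nat -> R) :
  monotone_mx M A -> nonsingular M A.
Proof.
case: M => [|n] Hm; first by exists (fun _ _ => 0) => i k Hi; exfalso; lia.
pose At : 'M[R]_n.+1 := \matrix_(i, j) A j i.
have At_inj : forall u : 'rV[R]_n.+1, u *m At = 0 -> u = 0.
  move=> u Hu; pose w j := u ord0 (inord j).
  have Aw0 : forall i, (i < n.+1)%coq_nat -> mv n.+1 A w i = 0.
    move=> i /ltP Hi; rewrite /mv sumM_big.
    have H := congr1 (fun m : 'rV[R]_n.+1 => m ord0 (inord i)) Hu.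
    rewrite !mxE /= in H; apply: etrans H; apply: eq_bigr => j _.
    by rewrite mxE /w inord_val inordK // mulrC.
  have w_ge0 : forall j, (j < n.+1)%coq_nat -> Rle R0 (w j).
    by apply: Hm => i Hi; rewrite Aw0 //; apply: Rle_refl.
  have w_le0 : forall j, (j < n.+1)%coq_nat -> Rle R0 (Ropp (w j)).
    by apply: Hm => i Hi; rewrite mv_opp Aw0 // Ropp_0; apply: Rle_refl.
  apply/rowP => j; rewrite !mxE.
  have Hj : (j < n.+1)%coq_nat by apply/ltP.
  move: (w_ge0 _ Hj) (w_le0 _ Hj); rewrite /w inord_val => h1 h2.
  by apply: Rle_antisym => //; apply: Ropp_le_cancel; rewrite Ropp_0.
have At_unit : At \in unitmx by rewrite -row_free_unit; apply: inj_row_free.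
exists (fun i j => invmx At (inord j) (inord i)) => i k /ltP Hi /ltP Hk.
have Hid : (1%:M : 'M[R]_n.+1) (inord k) (inord i) = idm i k.
  rewrite mxE /idm; case: (Nat.eqb_spec i k) => [->|Hne]; first by rewrite eqxx.
  by case: eqP => // /(congr1 val); rewrite /= !inordK // => E; case: Hne.
split; [rewrite -Hid -(mulVmx At_unit) | rewrite -Hid -(mulmxV At_unit)];
  rewrite /mm sumM_big !mxE; apply: eq_bigr => j _;
  by rewrite !mxE inord_val inordK // mulrC.
Qed.

End MonotoneInvertible.

Lemma Un_cv_ext u w l : (forall n, u n = w n) -> Un_cv u l -> Un_cv w l.
Proof.
  intros E H e He. destruct (H e He) as [N HN].
  exists N. intros n Hn. rewrite <- E. auto.
Qed.

Lemma Un_cv_const c : Un_cv (fun _ => c) c.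
Proof.
  intros e He. exists O. intros n _. unfold Rdist. rewrite Rminus_diag, Rabs_R0. exact He.
Qed.

Lemma Un_cv_S u l : Un_cv (fun n => u (S n)) l <-> Un_cv u l.
Proof.
  split; intros H e He; destruct (H e He) as [N HN].
  - exists (S N). intros [|n] Hn; [lia|]. apply HN; lia.
  - exists N. intros n Hn. apply HN; lia.
Qed.

Lemma sumM_cv M (f : nat -> nat -> R) g :
  (forall j, (j < M)%nat -> Un_cv (fun l => f l j) (g j)) ->
  Un_cv (fun l => sumM M (f l)) (sumM M g).
Proof.
  induction M as [|M IH]; intros H; [exact (Un_cv_const 0)|].
  rewrite sumM_S. apply (Un_cv_ext (fun l => sumM M (f l) + f l M)).
  - intros l. symmetry. apply sumM_S.
  - apply CV_plus; [apply IH; intros|]; apply H; lia.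
Qed.

Lemma mv_cv M A x v i :
  (forall j, (j < M)%nat -> Un_cv (fun l => x l j) (v j)) ->
  Un_cv (fun l => mv M A (x l) i) (mv M A v i).
Proof.
  intros H. apply sumM_cv. intros j Hj. apply CV_mult; [apply Un_cv_const|auto].
Qed.

Lemma sumM_abs_cv0 M (f : nat -> nat -> R) :
  (forall j, (j < M)%nat -> Un_cv (fun l => f l j) 0) ->
  Un_cv (fun l => sumM M (fun j => Rabs (f l j))) 0.
Proof.
  intros H.
  pose proof (sumM_cv M (fun l j => Rabs (f l j)) (fun _ => Rabs 0)) as Hcv.
  rewrite (sumM_zero M (fun _ => Rabs 0)) in Hcv by (intros; apply Rabs_R0).
  apply Hcv. intros j Hj. apply cv_cvabs, H, Hj.
Qed.

Lemma series_terms_cv0 e s : infinite_sum e s -> Un_cv e 0.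
Proof.
  intros H. apply (proj1 (Un_cv_S e 0)).
  apply (Un_cv_ext (fun n => sum_f_R0 e (S n) - sum_f_R0 e n)).
  - intros n. simpl. ring.
  - rewrite <- (Rminus_diag s). apply CV_minus; [apply (proj2 (Un_cv_S _ _))|]; exact H.
Qed.

Lemma infinite_sum_scal e s c :
  infinite_sum e s -> infinite_sum (fun n => c * e n) (c * s).
Proof.
  intros H. apply (Un_cv_ext (fun n => c * sum_f_R0 e n)).
  - intros n. rewrite scal_sum. apply sum_eq. intros; ring.
  - apply CV_mult; [apply Un_cv_const|exact H].
Qed.

(* x n + e 0 + ... + e n increases and is bounded above. *)
Lemma almost_growing_cv x e s :
  (forall n, 0 <= e n) -> infinite_sum e s ->
  (forall n, x n - e (S n) <= x (S n)) -> has_ub x ->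
  exists l, Un_cv x l.
Proof.
  intros He Hs Hx [B HB].
  set (u n := x n + sum_f_R0 e n).
  assert (Hu : Un_growing u) by (intros n; unfold u; simpl; specialize (Hx n); lra).
  assert (Hub : has_ub u).
  { exists (B + s). intros y [n ->]. unfold u.
    assert (x n <= B) by (apply HB; exists n; reflexivity).
    assert (sum_f_R0 e n <= s) by (apply sum_incr; auto). lra. }
  destruct (growing_cv u Hu Hub) as [L HL]. exists (L - s).
  apply (Un_cv_ext (fun n => u n - sum_f_R0 e n)); [intros; unfold u; ring|].
  apply CV_minus; auto.
Qed.

Section Bellman.

Variables (M : nat) (Pol : nat -> Type).
Variables (a : forall i, Pol i -> nat -> R) (bb : forall i, Pol i -> R).
Variables (C K : R).

Local Notation policy := (forall i, Pol i).
Local Notation A P := (Amat Pol a P).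
Local Notation resid := (resid M Pol a bb).

Hypothesis inverse_bounded : forall P B, is_inverse M (A P) B ->
  forall i j, (i < M)%nat -> (j < M)%nat -> Rabs (B i j) <= C.
Hypothesis data_bounded : forall P i, (i < M)%nat ->
  Rabs (bvec Pol bb P i) <= K /\ forall j, (j < M)%nat -> Rabs (A P i j) <= K.
Hypothesis policy_monotone : forall P, monotone_mx M (A P).
Hypothesis policies_inhabited : forall i, inhabited (Pol i).

Let G := INR M * Rmax C 0.

Lemma G_nonneg : 0 <= G.
Proof. apply Rmult_le_pos; [apply pos_INR|apply Rmax_r]. Qed.

Lemma policy_bound P x c : 0 <= c ->
  (forall i, (i < M)%nat -> mv M (A P) x i <= c) ->
  forall j, (j < M)%nat -> x j <= G * c.
Proof.
  intros Hc Hx. destruct (MonotoneInvertible.monotone_mx_nonsingular _ _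
    (policy_monotone P)) as [B HB].
  eapply monotone_mx_bound; eauto.
Qed.

Lemma resid_sub P x y i :
  resid P x i - resid P y i = - mv M (A P) (fun j => x j - y j) i.
Proof. unfold Defs.resid. rewrite mv_sub. ring. Qed.

Lemma resid_lipschitz P x y i : (i < M)%nat ->
  Rabs (resid P x i - resid P y i) <= K * sumM M (fun j => Rabs (x j - y j)).
Proof.
  intros Hi. rewrite resid_sub, Rabs_Ropp.
  apply mv_abs_le. apply (data_bounded P i Hi).
Qed.

Lemma resid_cv P x v i :
  (forall j, (j < M)%nat -> Un_cv (fun l => x l j) (v j)) ->
  Un_cv (fun l => resid P (x l) i) (resid P v i).
Proof.
  intros Hx. unfold Defs.resid.
  replace (- mv M (A P) v i + bvec Pol bb P i)
    with (bvec Pol bb P i - mv M (A P) v i) by ring.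
  apply (Un_cv_ext (fun l => bvec Pol bb P i - mv M (A P) (x l) i)); [intros; ring|].
  apply CV_minus; [apply Un_cv_const|apply mv_cv, Hx].
Qed.

Lemma resid_le_sup v s P i :
  is_sup_resid M Pol a bb v s -> (i < M)%nat -> resid P v i <= s i.
Proof. intros Hs Hi. apply (proj1 (Hs i Hi)). exists P. reflexivity. Qed.

(* Row i of the residual only involves P i, so near-optimal rows can be chosen
   independently and glued into one policy. *)
Lemma near_optimal_policy w d : bellman_sol M Pol a bb w -> 0 < d ->
  exists P : policy, forall i, (i < M)%nat -> - d < resid P w i.
Proof.
  intros Hw Hd.
  assert (Hrow : forall i, exists q : Pol i, (i < M)%nat ->
            - d < - sumM M (fun j => a i q j * w j) + bb i q).
  { intros i. destruct (Compare_dec.lt_dec i M) as [Hi|Hi].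
    - destruct (classic (exists Q : policy, - d < resid Q w i)) as [[Q HQ]|Hnone].
      + exists (Q i). intros _. exact HQ.
      + exfalso. enough (0 <= - d) by lra.
        apply (proj2 (Hw i Hi)). intros x [Q ->].
        apply Rnot_lt_le. intros HQ. apply Hnone. exists Q. exact HQ.
    - destruct (policies_inhabited i) as [q]. exists q. lia. }
  exists (fun i => proj1_sig (constructive_indefinite_description _ (Hrow i))).
  intros i Hi. exact (proj2_sig (constructive_indefinite_description _ (Hrow i)) Hi).
Qed.

Lemma bellman_sol_le w1 w2 :
  bellman_sol M Pol a bb w1 -> bellman_sol M Pol a bb w2 ->
  forall i, (i < M)%nat -> w1 i <= w2 i.
Proof.
  intros H1 H2 i Hi. apply Rle_plus_epsilon. intros e He.
  pose proof G_nonneg as HG.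
  set (d := e / (G + 1)).
  assert (Hd : 0 < d) by (apply Rdiv_lt_0_compat; lra).
  assert (Hde : e = (G + 1) * d) by (unfold d; field; lra).
  destruct (near_optimal_policy w1 d H1 Hd) as [P HP].
  enough (w1 i - w2 i <= G * d) by lra.
  apply (policy_bound P (fun j => w1 j - w2 j) d); [lra| |exact Hi].
  intros k Hk. rewrite mv_sub.
  pose proof (HP k Hk). pose proof (resid_le_sup w2 (fun _ => 0) P k H2 Hk).
  unfold Defs.resid in *. lra.
Qed.

Lemma bellman_sol_unique w1 w2 :
  bellman_sol M Pol a bb w1 -> bellman_sol M Pol a bb w2 ->
  forall i, (i < M)%nat -> w1 i = w2 i.
Proof. intros H1 H2 i Hi. apply Rle_antisym; apply bellman_sol_le; assumption. Qed.

Section Iteration.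

Variables (eps : nat -> R) (sig : R).
Variables (pol : nat -> policy) (vs : nat -> nat -> R).

Hypothesis eps_pos : forall l, (1 <= l)%nat -> 0 < eps l.
Hypothesis eps_summable : infinite_sum (fun n => eps (S n)) sig.
Hypothesis iteration : eps_policy_iteration M Pol a bb eps pol vs.

Lemma iterate_resid_zero l i : (1 <= l)%nat -> (i < M)%nat ->
  resid (pol l) (vs l) i = 0.
Proof.
  intros Hl Hi. unfold Defs.resid. rewrite (proj2 (iteration l Hl) i Hi). ring.
Qed.

Lemma iterate_le l j : (1 <= l)%nat -> (j < M)%nat -> vs l j <= G * K.
Proof.
  intros Hl Hj. apply (policy_bound (pol l) (vs l) K); [| |exact Hj].
  - eapply Rle_trans; [apply Rabs_pos|apply (proj1 (data_bounded (pol l) j Hj))].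
  - intros i Hi. rewrite (proj2 (iteration l Hl) i Hi).
    eapply Rle_trans; [apply Rle_abs|apply (proj1 (data_bounded (pol l) i Hi))].
Qed.

Lemma iterate_step l j : (1 <= l)%nat -> (j < M)%nat ->
  vs l j - G * eps (S l) <= vs (S l) j.
Proof.
  intros Hl Hj.
  destruct (iteration (S l)) as [[s [Hs Hopt]] Hsol]; [lia|].
  replace (S l - 1)%nat with l in * by lia.
  enough (vs l j - vs (S l) j <= G * eps (S l)) by lra.
  apply (policy_bound (pol (S l)) (fun j => vs l j - vs (S l) j));
    [apply Rlt_le, eps_pos; lia| |exact Hj].
  intros i Hi. rewrite mv_sub, (Hsol i Hi).
  pose proof (Hopt i Hi). pose proof (resid_le_sup _ _ (pol l) i Hs Hi).
  rewrite iterate_resid_zero in * by assumption.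
  unfold Defs.resid in *. lra.
Qed.

Lemma iterates_converge :
  exists v, forall i, (i < M)%nat -> Un_cv (fun l => vs l i) (v i).
Proof.
  assert (Hcv : forall i, exists L, (i < M)%nat -> Un_cv (fun l => vs l i) L).
  { intros i. destruct (Compare_dec.lt_dec i M) as [Hi|Hi]; [|exists 0; lia].
    destruct (almost_growing_cv (fun n => vs (S n) i) (fun n => G * eps (S n))
                (G * sig)) as [L HL].
    - intros n. apply Rmult_le_pos; [apply G_nonneg|apply Rlt_le, eps_pos; lia].
    - apply infinite_sum_scal, eps_summable.
    - intros n. apply iterate_step; lia.
    - exists (G * K). intros y [n ->]. apply iterate_le; lia.
    - exists L. intros _. apply Un_cv_S, HL. }
  destruct (functional_choice _ Hcv) as [v Hv]. exists v. exact Hv.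
Qed.

Lemma iterates_limit_bellman_sol v :
  (forall i, (i < M)%nat -> Un_cv (fun l => vs l i) (v i)) ->
  bellman_sol M Pol a bb v.
Proof.
  intros Hv.
  assert (HvS : forall j, (j < M)%nat -> Un_cv (fun l => vs (S l) j) (v j))
    by (intros j Hj; apply (proj2 (Un_cv_S (fun l => vs l j) _)); auto).
  assert (Hgap : Un_cv (fun n => K * sumM M (fun j => Rabs (vs n j - vs (S n) j))) 0).
  { rewrite <- (Rmult_0_r K). apply CV_mult; [apply Un_cv_const|].
    apply sumM_abs_cv0. intros j Hj.
    rewrite <- (Rminus_diag (v j)). apply CV_minus; auto. }
  assert (Hdist : Un_cv (fun n => K * sumM M (fun j => Rabs (vs (S n) j - v j))) 0).
  { rewrite <- (Rmult_0_r K). apply CV_mult; [apply Un_cv_const|].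
    apply sumM_abs_cv0. intros j Hj.
    rewrite <- (Rminus_diag (v j)). apply CV_minus; [auto|apply Un_cv_const]. }
  intros i Hi. split.
  - intros x [P ->]. enough (resid P v i <= 0 + 0) by lra.
    apply (@Rle_cv_lim (fun n => resid P (vs n) i)
             (fun n => K * sumM M (fun j => Rabs (vs n j - vs (S n) j)) + eps (S n)) _ _);
      [|apply resid_cv, Hv|apply CV_plus; [exact Hgap|exact (series_terms_cv0 _ _ eps_summable)]].
    intros n.
    destruct (iteration (S n)) as [[s [Hs Hopt]] _]; [lia|].
    replace (S n - 1)%nat with n in * by lia.
    pose proof (resid_le_sup _ _ P i Hs Hi). pose proof (Hopt i Hi).
    pose proof (resid_lipschitz (pol (S n)) (vs n) (vs (S n)) i Hi).
    rewrite (iterate_resid_zero (S n)) in * by lia.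
    pose proof (Rle_abs (resid (pol (S n)) (vs n) i - 0)). lra.
  - intros b Hb. enough (- 0 <= b) by lra.
    apply (@Rle_cv_lim (opp_seq (fun n => K * sumM M (fun j => Rabs (vs (S n) j - v j))))
             (fun _ => b) _ _); [|exact (CV_opp _ _ Hdist)|apply Un_cv_const].
    intros n. unfold opp_seq.
    pose proof (Hb _ (ex_intro _ (pol (S n)) eq_refl)).
    pose proof (resid_lipschitz (pol (S n)) (vs (S n)) v i Hi).
    rewrite (iterate_resid_zero (S n)) in * by lia.
    pose proof (Rle_abs (0 - resid (pol (S n)) v i)). lra.
Qed.

End Iteration.
End Bellman.

Theorem theoremA3
  (M : nat) (Pol : nat -> Type)
  (a : forall i, Pol i -> nat -> R) (bb : forall i, Pol i -> R)
  (Hne : forall i, inhabited (Pol i))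
  (HH0 : H0 M Pol a)
  (Hbd : bounded_data M Pol a bb)
  (Hmono : forall P : forall i, Pol i, monotone_mx M (Amat Pol a P))
  (eps : nat -> R)
  (Heps_pos : forall l, (1 <= l)%nat -> 0 < eps l)
  (Heps_sum : exists sig, infinite_sum (fun n => eps (S n)) sig)
  (pol : nat -> forall i, Pol i) (vs : nat -> nat -> R)
  (Hiter : eps_policy_iteration M Pol a bb eps pol vs) :
  exists v : nat -> R,
    bellman_sol M Pol a bb v /\
    (forall w, bellman_sol M Pol a bb w -> forall i, (i < M)%nat -> w i = v i) /\
    (forall i, (i < M)%nat -> Un_cv (fun l => vs l i) (v i)).
Proof.
  destruct HH0 as [C HC], Hbd as [K HK], Heps_sum as [sig Hsig].
  destruct (iterates_converge M Pol a bb C K HC HK Hmono eps sig pol vs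
              Heps_pos Hsig Hiter) as [v Hv].
  pose proof (iterates_limit_bellman_sol M Pol a bb K HK eps sig pol vs
                Hsig Hiter v Hv) as Hsol.
  exists v. split; [exact Hsol|split; [|exact Hv]].
  intros w Hw. exact (bellman_sol_unique M Pol a bb C HC Hmono Hne w v Hw Hsol).
Qed.
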